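(* (1) $\mathrm{alpha}$ is an equivalence relation on the set of good quasiterms, and $\mathrm{alphaAbs}$ is an equivalence relation on the set of good quasiabstractions. (2) On good quasiterms and quasiabstractions, the predicates obtained by replacing the abstraction clause in the definition of $\mathrm{alpha}/\mathrm{alphaAbs}$ by $\mathrm{alphaAbs}(\mathrm{qAbs}\;xs\;x\;X)(\mathrm{qAbs}\;xs'\;x'\;X')\iff xs=xs'\wedge\big(\forall y\notin\{x,x'\}.\ \mathrm{qFresh}\;xs\;y\;X\wedge\mathrm{qFresh}\;xs\;y\;X'\Longrightarrow\mathrm{alpha}(X[y\wedge x]_{xs})(X'[y\wedge x']_{xs})\big)$ coincide with $\mathrm{alpha}$ and $\mathrm{alphaAbs}$.
   Context: Fix types $\mathrm{var}$, $\mathrm{varsort}$, $\mathrm{index}$, $\mathrm{bindex}$, $\mathrm{opsym}$. $(\alpha,\beta)\,\mathrm{input}$ is the type of partial functions $\alpha\to\beta\;\mathrm{option}$; $\mathrm{dom}\,f=\{i\mid f\,i\neq\mathrm{None}\}$. For a predicate $P$, $\uparrow P\;inp$ holds iff $P$ holds of all defined values; for a binary relation $P$, $\uparrow P\;inp\;inp'$ holds iff for every $i$ either $inp\;i=inp'\;i=\mathrm{None}$, or $inp\;i=\mathrm{Some}\;b$, $inp'\;i=\mathrm{Some}\;b'$ and $P\;b\;b'$. Quasiterms/quasiabstractions: mutually recursive free datatypes $\mathrm{qterm}=\mathrm{qVar}\;\mathrm{varsort}\;\mathrm{var}\mid\mathrm{qOp}\;\mathrm{opsym}\;((\mathrm{index},\mathrm{qterm})\mathrm{input})\;((\mathrm{bindex},\mathrm{qabs})\mathrm{input})$,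 $\mathrm{qabs}=\mathrm{qAbs}\;\mathrm{varsort}\;\mathrm{var}\;\mathrm{qterm}$ ($x$ bound in $X$ in $\mathrm{qAbs}\;xs\;x\;X$). $\mathrm{qFresh}\;xs\;x\;X$: the variable $x$ of varsort $xs$ does not occur free in $X$. Swapping $X[y\wedge x]_{xs}$: replace every occurrence (free, bound, or binding) of the variable $y$ of varsort $xs$ by $x$ and vice versa. Alpha-equivalence is defined mutually recursively: $\mathrm{alpha}(\mathrm{qVar}\;xs\;x)(\mathrm{qVar}\;xs'\;x')\iff xs=xs'\wedge x=x'$; $\mathrm{alpha}(\mathrm{qOp}\;\delta\;inp\;binp)(\mathrm{qOp}\;\delta'\;inp'\;binp')\iff\delta=\delta'\wedge\uparrow\mathrm{alpha}\;inp\;inp'\wedge\uparrow\mathrm{alphaAbs}\;binp\;binp'$; $\mathrm{alpha}$ is false between a $\mathrm{qVar}$ and a $\mathrm{qOp}$ quasiterm; $\mathrm{alphaAbs}(\mathrm{qAbs}\;xs\;x\;X)(\mathrm{qAbs}\;xs'\;x'\;X')\iff xs=xs'\wedge\exists y\notin\{x,x'\}.\ \mathrm{qFresh}\;xs\;y\;X\wedge\mathrm{qFresh}\;xs\;y\;X'\wedge\mathrm{alpha}(X[y\wedge x]_{xs})(X'[y\wedge x']_{xs})$. Goodness: $\mathrm{qGood}(\mathrm{qVar}\;xs\;x)$; $\mathrm{qGood}(\mathrm{qOp}\;\delta\;inp\;binp)\iff\uparrow\mathrm{qGood}\;inp\wedge\uparrow\mathrm{qGoodAbs}\;binp\wedge|\mathrm{dom}\;inp|<|\mathrm{var}|\wedge|\mathrm{dom}\;binp|<|\mathrm{var}|$;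 $\mathrm{qGoodAbs}(\mathrm{qAbs}\;xs\;x\;X)\iff\mathrm{qGood}\;X$. Standing assumption: $|\mathrm{var}|$ is an infinite regular cardinal. *)

From Stdlib Require Import Classical ClassicalEpsilon.
Set Implicit Arguments.

Definition card_le (A B : Type) : Prop := exists f : A -> B, forall a a', f a = f a' -> a = a'.
Definition card_lt (A B : Type) : Prop := card_le A B /\ ~ card_le B A.

Definition infinite_type (T : Type) : Prop := card_le nat T.

Definition regular_type (T : Type) : Prop :=
  forall (I : Type) (F : I -> T -> Prop),
    card_lt I T ->
    (forall i, card_lt {x : T | F i x} T) ->
    card_lt {x : T | exists i, F i x} T.

Definition input (A B : Type) := A -> option B.
Definition dom (A B : Type) (f : input A B) : Type := {i : A | f i <> None}.

Section Quasiterms.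
Variables (var varsort index bindex opsym : Type).

Inductive qterm : Type :=
| qVar : varsort -> var -> qterm
| qOp : opsym -> (index -> option qterm) -> (bindex -> option qabs) -> qterm
with qabs : Type :=
| qAbs : varsort -> var -> qterm -> qabs.

Definition sw (x y z : var) : var :=
  if excluded_middle_informative (z = x) then y
  else if excluded_middle_informative (z = y) then x else z.

Definition swS (xs zs : varsort) (x y z : var) : var :=
  if excluded_middle_informative (zs = xs) then sw x y z else z.

(* qSwap xs y x X  is  X[y /\ x]_xs *)
Fixpoint qSwap (xs : varsort) (y x : var) (X : qterm) {struct X} : qterm :=
  match X with
  | qVar zs z => qVar zs (swS xs zs y x z)
  | qOp d inp binp =>
      qOp d (fun i => match inp i with Some Z => Some (qSwap xs y x Z) | None => None end)
            (fun i => match binp i with Some A => Some (qSwapAbs xs y x A) | None => None end)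
  end
with qSwapAbs (xs : varsort) (y x : var) (A : qabs) {struct A} : qabs :=
  match A with
  | qAbs zs z Z => qAbs zs (swS xs zs y x z) (qSwap xs y x Z)
  end.

Fixpoint qFresh (xs : varsort) (x : var) (X : qterm) {struct X} : Prop :=
  match X with
  | qVar ys y => ~ (ys = xs /\ y = x)
  | qOp _ inp binp =>
      (forall i, match inp i with Some Z => qFresh xs x Z | None => True end) /\
      (forall i, match binp i with Some A => qFreshAbs xs x A | None => True end)
  end
with qFreshAbs (xs : varsort) (x : var) (A : qabs) {struct A} : Prop :=
  match A with
  | qAbs ys y Z => (ys = xs /\ y = x) \/ qFresh xs x Z
  end.

Fixpoint qGood (X : qterm) : Prop :=
  match X with
  | qVar _ _ => True
  | qOp _ inp binp =>
      (forall i, match inp i with Some Z => qGood Z | None => True end) /\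
      (forall i, match binp i with Some A => qGoodAbs A | None => True end) /\
      card_lt (dom inp) var /\ card_lt (dom binp) var
  end
with qGoodAbs (A : qabs) : Prop :=
  match A with
  | qAbs _ _ Z => qGood Z
  end.

Inductive alpha : qterm -> qterm -> Prop :=
| alpha_Var : forall xs x, alpha (qVar xs x) (qVar xs x)
| alpha_Op : forall d inp inp' binp binp',
    (forall i, (inp i = None /\ inp' i = None) \/
               (exists Z Z', inp i = Some Z /\ inp' i = Some Z' /\ alpha Z Z')) ->
    (forall i, (binp i = None /\ binp' i = None) \/
               (exists A A', binp i = Some A /\ binp' i = Some A' /\ alphaAbs A A')) ->
    alpha (qOp d inp binp) (qOp d inp' binp')
with alphaAbs : qabs -> qabs -> Prop :=
| alphaAbs_Abs : forall xs x X x' X' y,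
    y <> x -> y <> x' -> qFresh xs y X -> qFresh xs y X' ->
    alpha (qSwap xs y x X) (qSwap xs y x' X') ->
    alphaAbs (qAbs xs x X) (qAbs xs x' X').

Inductive alphaAll : qterm -> qterm -> Prop :=
| alphaAll_Var : forall xs x, alphaAll (qVar xs x) (qVar xs x)
| alphaAll_Op : forall d inp inp' binp binp',
    (forall i, (inp i = None /\ inp' i = None) \/
               (exists Z Z', inp i = Some Z /\ inp' i = Some Z' /\ alphaAll Z Z')) ->
    (forall i, (binp i = None /\ binp' i = None) \/
               (exists A A', binp i = Some A /\ binp' i = Some A' /\ alphaAllAbs A A')) ->
    alphaAll (qOp d inp binp) (qOp d inp' binp')
with alphaAllAbs : qabs -> qabs -> Prop :=
| alphaAllAbs_Abs : forall xs x X x' X',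
    (forall y, y <> x -> y <> x' -> qFresh xs y X -> qFresh xs y X' ->
               alphaAll (qSwap xs y x X) (qSwap xs y x' X')) ->
    alphaAllAbs (qAbs xs x X) (qAbs xs x' X').

End Quasiterms.

From Stdlib Require Import Classical ClassicalEpsilon FunctionalExtensionality ProofIrrelevance List.
Set Implicit Arguments.

(* Since |var| is infinite and regular, every good quasiterm mentions fewer than
   |var| variables, so fresh variables always exist.  Swapping is a bijective
   renaming commuting with all constructions, hence alpha is preserved by swaps;
   swapping two fresh variables yields an alpha-equivalent term.  Together these
   show that the fresh variable witnessing an alpha-equivalence of abstractions can
   be replaced by any other fresh variable, which gives transitivity and the
   equivalence of the existential and universal abstraction clauses.  All
   inductions are over terms up to swapping, which is well founded because swaps
   preserve the shape of a term. *)

Lemma card_le_trans (A B C : Type) : card_le A B -> card_le B C -> card_le A C.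
Proof. intros [f Hf] [g Hg]; exists (fun a => g (f a)); auto. Qed.

Lemma card_le_lt_trans (A B C : Type) : card_le A B -> card_lt B C -> card_lt A C.
Proof.
  intros HAB [HBC HCB]; split.
  - exact (card_le_trans HAB HBC).
  - intro HCA; exact (HCB (card_le_trans HCA HAB)).
Qed.

Lemma card_le_subset (T : Type) (S S' : T -> Prop) :
  (forall v, S v -> S' v) -> card_le {v | S v} {v | S' v}.
Proof.
  intro HS; exists (fun a => exist _ (proj1_sig a) (HS _ (proj2_sig a))).
  intros [a Ha] [b Hb] E; apply subset_eq_compat; exact (EqdepFacts.eq_sig_fst E).
Qed.

Lemma card_le_dom_map (I B C : Type) (f : B -> C) (inp : input I B) :
  card_le (dom (fun i => match inp i with Some Z => Some (f Z) | None => None end)) (dom inp).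
Proof.
  unshelve eexists.
  - intros [i N]; exists i; destruct (inp i); [discriminate | contradiction].
  - intros [a Ha] [b Hb] E; apply subset_eq_compat; exact (EqdepFacts.eq_sig_fst E).
Qed.

Definition lift (I T : Type) (R : T -> T -> Prop) (f g : I -> option T) : Prop :=
  forall i, (f i = None /\ g i = None) \/
            (exists Z Z', f i = Some Z /\ g i = Some Z' /\ R Z Z').

Section Lift.
Variables (I T : Type).
Implicit Types (R : T -> T -> Prop) (f g h : I -> option T).

Lemma lift_refl R f : (forall i Z, f i = Some Z -> R Z Z) -> lift R f f.
Proof. intros H i; destruct (f i) as [Z|] eqn:E; [right; exists Z, Z; eauto | left; auto]. Qed.

Lemma lift_mono R (R' : T -> T -> Prop) f g : lift R f g ->
  (forall i Z Z', f i = Some Z -> g i = Some Z' -> R Z Z' -> R' Z Z') -> lift R' f g.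
Proof.
  intros H K i; destruct (H i) as [[E1 E2]|[Z [Z' [E1 [E2 E3]]]]]; [left | right]; eauto 10.
Qed.

Lemma lift_sym R (R' : T -> T -> Prop) f g : lift R f g ->
  (forall i Z Z', f i = Some Z -> g i = Some Z' -> R Z Z' -> R' Z' Z) -> lift R' g f.
Proof.
  intros H K i; destruct (H i) as [[E1 E2]|[Z [Z' [E1 [E2 E3]]]]]; [left | right]; eauto 10.
Qed.

Lemma lift_trans R f g h : lift R f g -> lift R g h ->
  (forall i Z Z' Z'', f i = Some Z -> g i = Some Z' -> h i = Some Z'' ->
     R Z Z' -> R Z' Z'' -> R Z Z'') ->
  lift R f h.
Proof.
  intros H1 H2 K i; destruct (H1 i) as [[E1 E2]|[Z [Z' [E1 [E2 E3]]]]];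
    destruct (H2 i) as [[F1 F2]|[W [W' [F1 [F2 F3]]]]]; try congruence.
  - left; auto.
  - rewrite E2 in F1; injection F1 as <-; right; eauto 10.
Qed.

Lemma lift_map R (R' : T -> T -> Prop) (s : T -> T) f g : lift R f g ->
  (forall i Z Z', f i = Some Z -> g i = Some Z' -> R Z Z' -> R' (s Z) (s Z')) ->
  lift R' (fun i => match f i with Some Z => Some (s Z) | None => None end)
          (fun i => match g i with Some Z => Some (s Z) | None => None end).
Proof.
  intros H K i; destruct (H i) as [[E1 E2]|[Z [Z' [E1 [E2 E3]]]]]; rewrite E1, E2;
    [left | right]; eauto 10.
Qed.

End Lift.

Section Alpha.
Variables var varsort index bindex opsym : Type.
Notation term := (qterm var varsort index bindex opsym).
Notation abs := (qabs var varsort index bindex opsym).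

Section Induction.
Variables (P : term -> Prop) (Q : abs -> Prop).
Hypothesis HVar : forall xs x, P (qVar _ _ _ xs x).
Hypothesis HOp : forall d inp binp, (forall i Z, inp i = Some Z -> P Z) ->
  (forall i A, binp i = Some A -> Q A) -> P (qOp d inp binp).
Hypothesis HAbs : forall xs x X, P X -> Q (qAbs xs x X).

Fixpoint qterm_ind_mut (X : term) : P X :=
  match X with
  | qVar _ _ _ xs x => HVar xs x
  | qOp d inp binp => HOp d inp binp
      (fun i => match inp i as o return forall Z, o = Some Z -> P Z with
                | Some Z0 => fun Z e =>
                    match e in _ = o return (match o with Some Z => P Z | None => True end) with
                    | eq_refl => qterm_ind_mut Z0 end
                | None => fun Z e => False_ind _
                    (match e in _ = o return (match o with Some _ => False | None => True end) with
                     | eq_refl => I end)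
                end)
      (fun i => match binp i as o return forall A, o = Some A -> Q A with
                | Some A0 => fun A e =>
                    match e in _ = o return (match o with Some A => Q A | None => True end) with
                    | eq_refl => qabs_ind_mut A0 end
                | None => fun A e => False_ind _
                    (match e in _ = o return (match o with Some _ => False | None => True end) with
                     | eq_refl => I end)
                end)
  end
with qabs_ind_mut (A : abs) : Q A :=
  match A with qAbs xs x X => HAbs xs x (qterm_ind_mut X) end.

Lemma qterm_qabs_ind : (forall X, P X) /\ (forall A, Q A).
Proof. exact (conj qterm_ind_mut qabs_ind_mut). Qed.

End Induction.

Ltac unfold_swS :=
  unfold swS, sw; repeat match goal with
  | |- context [excluded_middle_informative ?P] =>
      destruct (excluded_middle_informative P); subst; try congruence
  | H : context [excluded_middle_informative ?P] |- _ =>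
      destruct (excluded_middle_informative P); subst; try congruence
  end.

Lemma swS_invol (xs zs : varsort) (y x z : var) : swS xs zs y x (swS xs zs y x z) = z.
Proof. unfold_swS. Qed.

Lemma swS_inj (xs zs : varsort) (y x a b : var) : swS xs zs y x a = swS xs zs y x b -> a = b.
Proof.
  intro E; rewrite <- (swS_invol xs zs y x a), <- (swS_invol xs zs y x b); congruence.
Qed.

Lemma swS_compose (zs xs ws : varsort) (u v y x w : var) :
  swS zs ws u v (swS xs ws y x w) =
  swS xs ws (swS zs xs u v y) (swS zs xs u v x) (swS zs ws u v w).
Proof. unfold_swS. Qed.

Lemma swS_id (xs zs : varsort) (y x z : var) : (zs = xs -> z <> y /\ z <> x) -> swS xs zs y x z = z.
Proof. unfold_swS; firstorder congruence. Qed.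

Lemma swS_sort_neq (xs zs : varsort) (y x z : var) : zs <> xs -> swS xs zs y x z = z.
Proof. unfold_swS. Qed.

Lemma swS_r (xs : varsort) (y x : var) : swS xs xs y x x = y.
Proof. unfold_swS. Qed.

Lemma qSwap_compose zs xs u v y x (X : term) :
  qSwap zs u v (qSwap xs y x X) =
  qSwap xs (swS zs xs u v y) (swS zs xs u v x) (qSwap zs u v X).
Proof.
  revert X; apply (qterm_qabs_ind
    (fun X => qSwap zs u v (qSwap xs y x X) =
              qSwap xs (swS zs xs u v y) (swS zs xs u v x) (qSwap zs u v X))
    (fun A => qSwapAbs zs u v (qSwapAbs xs y x A) =
              qSwapAbs xs (swS zs xs u v y) (swS zs xs u v x) (qSwapAbs zs u v A))).
  - intros; simpl; f_equal; apply swS_compose.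
  - intros d inp binp IH1 IH2; simpl; f_equal; apply functional_extensionality; intro i.
    + destruct (inp i) eqn:E; simpl; [f_equal; eauto | reflexivity].
    + destruct (binp i) eqn:E; simpl; [f_equal; eauto | reflexivity].
  - intros; simpl; f_equal; auto; apply swS_compose.
Qed.

Lemma qFresh_qSwap_swS xs zs y x z (X : term) :
  qFresh zs (swS xs zs y x z) (qSwap xs y x X) <-> qFresh zs z X.
Proof.
  revert X; apply (qterm_qabs_ind
    (fun X => qFresh zs (swS xs zs y x z) (qSwap xs y x X) <-> qFresh zs z X)
    (fun A => qFreshAbs zs (swS xs zs y x z) (qSwapAbs xs y x A) <-> qFreshAbs zs z A)).
  - intros ys w; simpl; split; intros H [<- E]; apply H;
      split; first [reflexivity | congruence | exact (swS_inj _ _ _ _ _ _ E)].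
  - intros d inp binp IH1 IH2; simpl; split; intros [H1 H2]; split; intro i.
    + specialize (H1 i); destruct (inp i) eqn:E; auto; eapply IH1; eauto.
    + specialize (H2 i); destruct (binp i) eqn:E; auto; eapply IH2; eauto.
    + specialize (H1 i); destruct (inp i) eqn:E; auto; eapply IH1; eauto.
    + specialize (H2 i); destruct (binp i) eqn:E; auto; eapply IH2; eauto.
  - intros ys w X IH; simpl; rewrite IH.
    split; intros [[<- E]|H]; auto; left;
      split; first [reflexivity | congruence | exact (swS_inj _ _ _ _ _ _ E)].
Qed.

Lemma qFresh_qSwap xs zs y x z (X : term) :
  qFresh zs z (qSwap xs y x X) <-> qFresh zs (swS xs zs y x z) X.
Proof. rewrite <- (qFresh_qSwap_swS xs zs y x (swS xs zs y x z)), swS_invol; reflexivity. Qed.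

Definition qSwapL (l : list (varsort * var * var)) (X : term) : term :=
  fold_right (fun p X => qSwap (fst (fst p)) (snd (fst p)) (snd p) X) X l.
Definition qSwapLAbs (l : list (varsort * var * var)) (A : abs) : abs :=
  fold_right (fun p A => qSwapAbs (fst (fst p)) (snd (fst p)) (snd p) A) A l.
Definition swSL (l : list (varsort * var * var)) (zs : varsort) (z : var) : var :=
  fold_right (fun p z => swS (fst (fst p)) zs (snd (fst p)) (snd p) z) z l.

Lemma qSwapL_qVar l xs x : qSwapL l (qVar _ _ _ xs x) = qVar _ _ _ xs (swSL l xs x).
Proof. induction l; simpl; [|rewrite IHl]; reflexivity. Qed.

Lemma qSwapL_qOp l d inp binp : qSwapL l (qOp d inp binp) =
  qOp d (fun i => match inp i with Some Z => Some (qSwapL l Z) | None => None end)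
        (fun i => match binp i with Some A => Some (qSwapLAbs l A) | None => None end).
Proof.
  induction l; simpl; [|rewrite IHl; simpl];
    f_equal; apply functional_extensionality; intro i; destruct (_ i); reflexivity.
Qed.

Lemma qSwapLAbs_qAbs l xs x X : qSwapLAbs l (qAbs xs x X) = qAbs xs (swSL l xs x) (qSwapL l X).
Proof. induction l; simpl; [|rewrite IHl]; reflexivity. Qed.

Lemma qSwapL_app l1 l2 X : qSwapL (l1 ++ l2) X = qSwapL l1 (qSwapL l2 X).
Proof. apply fold_right_app. Qed.

Section SwapInduction.
Variables (P : term -> Prop) (Q : abs -> Prop).
Hypothesis HVar : forall xs x, P (qVar _ _ _ xs x).
Hypothesis HOp : forall d inp binp, (forall i Z, inp i = Some Z -> P Z) ->
  (forall i A, binp i = Some A -> Q A) -> P (qOp d inp binp).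
Hypothesis HAbs : forall xs x X, (forall l, P (qSwapL l X)) -> Q (qAbs xs x X).

Lemma qterm_qabs_swap_ind : (forall X, P X) /\ (forall A, Q A).
Proof.
  assert (H : (forall X l, P (qSwapL l X)) /\ (forall A l, Q (qSwapLAbs l A))).
  { apply qterm_qabs_ind.
    - intros; rewrite qSwapL_qVar; auto.
    - intros d inp binp IH1 IH2 l; rewrite qSwapL_qOp; apply HOp.
      + intros i Z E; destruct (inp i) eqn:E'; [injection E as <-; eauto | discriminate].
      + intros i A E; destruct (binp i) eqn:E'; [injection E as <-; eauto | discriminate].
    - intros xs x X IH l; rewrite qSwapLAbs_qAbs; apply HAbs.
      intro l'; rewrite <- qSwapL_app; auto. }
  exact (conj (fun X => proj1 H X nil) (fun A => proj2 H A nil)).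
Qed.

End SwapInduction.

Definition small (S : var -> Prop) : Prop := card_lt {v | S v} var.

Lemma small_sub (S S' : var -> Prop) : (forall v, S v -> S' v) -> small S' -> small S.
Proof. intro HS; apply card_le_lt_trans, card_le_subset, HS. Qed.

Lemma small_avoid (S : var -> Prop) : small S -> exists y, ~ S y.
Proof.
  intros [_ H]; apply NNPP; intro Hall; apply H.
  assert (K : forall y, S y) by (intro y; apply NNPP; intro; apply Hall; eauto).
  exists (fun y => exist _ y (K y)); intros a b E; exact (EqdepFacts.eq_sig_fst E).
Qed.

Hypothesis Hinf : infinite_type var.
Hypothesis Hreg : regular_type var.

Lemma small_single (a : var) : small (fun v => v = a).
Proof.
  split.
  - exists (@proj1_sig _ _); intros [u Hu] [v Hv] E; apply subset_eq_compat; exact E.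
  - intros [f Hf]; destruct Hinf as [g Hg].
    assert (E : g 0 = g 1).
    { apply Hf; destruct (f (g 0)), (f (g 1)); apply subset_eq_compat; congruence. }
    discriminate (Hg _ _ E).
Qed.

Lemma small_empty : small (fun _ => False).
Proof. destruct Hinf as [g _]; apply small_sub with (fun v => v = g 0), small_single; tauto. Qed.

Lemma card_lt_bool : card_lt bool var.
Proof.
  destruct Hinf as [g Hg]; split.
  - exists (fun b : bool => if b then g 0 else g 1).
    intros [|] [|] E; auto; discriminate (Hg _ _ E).
  - intros [f Hf].
    assert (K : forall n m, f (g n) = f (g m) -> n = m) by auto.
    destruct (f (g 0)) eqn:E0, (f (g 1)) eqn:E1, (f (g 2)) eqn:E2;
      first [ discriminate (K 0 1 ltac:(congruence))
            | discriminate (K 0 2 ltac:(congruence))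
            | discriminate (K 1 2 ltac:(congruence)) ].
Qed.

Lemma small_union (S S' : var -> Prop) : small S -> small S' -> small (fun v => S v \/ S' v).
Proof.
  intros HS HS'.
  apply small_sub with (fun v => exists b : bool, (if b then S else S') v).
  - intros v [H|H]; [exists true | exists false]; auto.
  - apply Hreg; [exact card_lt_bool | intros [|]; assumption].
Qed.

Fixpoint qOccurs (v : var) (X : term) {struct X} : Prop :=
  match X with
  | qVar _ _ _ _ x => x = v
  | qOp _ inp binp =>
      (exists i, match inp i with Some Z => qOccurs v Z | None => False end) \/
      (exists i, match binp i with Some A => qOccursAbs v A | None => False end)
  end
with qOccursAbs (v : var) (A : abs) {struct A} : Prop :=
  match A with qAbs _ x X => x = v \/ qOccurs v X end.

Lemma qFresh_of_not_qOccurs xs v (X : term) : ~ qOccurs v X -> qFresh xs v X.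
Proof.
  revert X; apply (qterm_qabs_ind (fun X => ~ qOccurs v X -> qFresh xs v X)
                                  (fun A => ~ qOccursAbs v A -> qFreshAbs xs v A)).
  - simpl; intros ys y H [_ E]; auto.
  - simpl; intros d inp binp IH1 IH2 H; split; intro i.
    + destruct (inp i) eqn:E; auto; eapply IH1; eauto.
      intro K; apply H; left; exists i; rewrite E; exact K.
    + destruct (binp i) eqn:E; auto; eapply IH2; eauto.
      intro K; apply H; right; exists i; rewrite E; exact K.
  - simpl; intros ys y X IH H; right; apply IH; intro K; apply H; right; exact K.
Qed.

Lemma qGood_arg d inp binp i (Z : term) : qGood (qOp d inp binp) -> inp i = Some Z -> qGood Z.
Proof. intros [G _] E; specialize (G i); rewrite E in G; exact G. Qed.

Lemma qGood_absarg d inp binp i (A : abs) :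
  qGood (qOp d inp binp) -> binp i = Some A -> qGoodAbs A.
Proof. intros [_ [G _]] E; specialize (G i); rewrite E in G; exact G. Qed.

Lemma small_input_union (I T : Type) (inp : input I T) (occ : var -> T -> Prop) :
  card_lt (dom inp) var -> (forall i Z, inp i = Some Z -> small (fun v => occ v Z)) ->
  small (fun v => exists i, match inp i with Some Z => occ v Z | None => False end).
Proof.
  intros D HZ.
  eapply small_sub; [| apply (Hreg (fun (i : dom inp) v =>
      match inp (proj1_sig i) with Some Z => occ v Z | None => False end) D)].
  - intros v [i Hi].
    assert (N : inp i <> None) by (destruct (inp i); [discriminate | contradiction]).
    exists (exist _ i N); exact Hi.
  - intros [i N]; simpl; destruct (inp i) eqn:E; [exact (HZ _ _ E) | exact small_empty].
Qed.

Lemma qOccurs_small (X : term) : qGood X -> small (fun v => qOccurs v X).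
Proof.
  revert X; apply (qterm_qabs_ind (fun X => qGood X -> small (fun v => qOccurs v X))
                                  (fun A => qGoodAbs A -> small (fun v => qOccursAbs v A))).
  - intros xs x _; apply small_sub with (fun v => v = x), small_single; simpl; congruence.
  - intros d inp binp IH1 IH2 G; pose proof G as [_ [_ [D1 D2]]].
    apply small_union; apply small_input_union; eauto using qGood_arg, qGood_absarg.
  - simpl; intros xs x X IH G.
    apply small_union; [apply small_sub with (fun v => v = x), small_single|]; auto.
Qed.

Lemma qGood_qSwap xs y x (X : term) : qGood X -> qGood (qSwap xs y x X).
Proof.
  revert X; apply (qterm_qabs_ind (fun X => qGood X -> qGood (qSwap xs y x X))
                                  (fun A => qGoodAbs A -> qGoodAbs (qSwapAbs xs y x A))).
  - simpl; auto.
  - simpl; intros d inp binp IH1 IH2 [G1 [G2 [D1 D2]]]; split; [|split; [|split]].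
    + intro i; specialize (G1 i); destruct (inp i) eqn:E; eauto.
    + intro i; specialize (G2 i); destruct (binp i) eqn:E; eauto.
    + eapply card_le_lt_trans; [apply card_le_dom_map | exact D1].
    + eapply card_le_lt_trans; [apply card_le_dom_map | exact D2].
  - simpl; auto.
Qed.

Ltac split_nor :=
  repeat match goal with H : ~ (_ \/ _) |- _ => apply not_or_and in H; destruct H end.
Ltac prove_small :=
  repeat apply small_union; first [apply qOccurs_small; assumption | apply small_single].
Ltac pick_fresh y S :=
  destruct (@small_avoid S) as [y ?]; [prove_small | split_nor].

Lemma alpha_qVar_inv xs x (Y : term) : alpha (qVar _ _ _ xs x) Y -> Y = qVar _ _ _ xs x.
Proof. intro H; inversion H; reflexivity. Qed.

Lemma alpha_qOp_inv d inp binp (Y : term) : alpha (qOp d inp binp) Y ->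
  exists inp' binp', Y = qOp d inp' binp' /\ lift (@alpha _ _ _ _ _) inp inp' /\
                     lift (@alphaAbs _ _ _ _ _) binp binp'.
Proof. intro H; inversion H; subst; eauto 10. Qed.

Lemma alphaAbs_inv xs x (X : term) B : alphaAbs (qAbs xs x X) B ->
  exists x' X' y, B = qAbs xs x' X' /\ y <> x /\ y <> x' /\ qFresh xs y X /\
    qFresh xs y X' /\ alpha (qSwap xs y x X) (qSwap xs y x' X').
Proof. intro H; inversion H; subst; eauto 20. Qed.

Lemma alphaAll_qVar_inv xs x (Y : term) : alphaAll (qVar _ _ _ xs x) Y -> Y = qVar _ _ _ xs x.
Proof. intro H; inversion H; reflexivity. Qed.

Lemma alphaAll_qOp_inv d inp binp (Y : term) : alphaAll (qOp d inp binp) Y ->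
  exists inp' binp', Y = qOp d inp' binp' /\ lift (@alphaAll _ _ _ _ _) inp inp' /\
                     lift (@alphaAllAbs _ _ _ _ _) binp binp'.
Proof. intro H; inversion H; subst; eauto 10. Qed.

Lemma alphaAllAbs_inv xs x (X : term) B : alphaAllAbs (qAbs xs x X) B ->
  exists x' X', B = qAbs xs x' X' /\
    (forall y, y <> x -> y <> x' -> qFresh xs y X -> qFresh xs y X' ->
       alphaAll (qSwap xs y x X) (qSwap xs y x' X')).
Proof. intro H; inversion H; subst; eauto 20. Qed.

Lemma alpha_qSwap_all :
  (forall (X : term) Y zs u v, alpha X Y -> alpha (qSwap zs u v X) (qSwap zs u v Y)) /\
  (forall (A : abs) B zs u v, alphaAbs A B -> alphaAbs (qSwapAbs zs u v A) (qSwapAbs zs u v B)).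
Proof.
  apply qterm_qabs_swap_ind.
  - intros xs x Y zs u v H; rewrite (alpha_qVar_inv H); constructor.
  - intros d inp binp IH1 IH2 Y zs u v H.
    destruct (alpha_qOp_inv H) as [inp' [binp' [-> [H1 H2]]]]; simpl; constructor.
    + eapply lift_map; [exact H1 | eauto].
    + eapply lift_map; [exact H2 | eauto].
  - intros xs x X IH B zs u v H.
    destruct (alphaAbs_inv H) as [x' [X' [y [-> [N1 [N2 [F1 [F2 Ha]]]]]]]]; simpl.
    apply alphaAbs_Abs with (y := swS zs xs u v y).
    + intro K; exact (N1 (swS_inj _ _ _ _ _ _ K)).
    + intro K; exact (N2 (swS_inj _ _ _ _ _ _ K)).
    + rewrite qFresh_qSwap, swS_invol; exact F1.
    + rewrite qFresh_qSwap, swS_invol; exact F2.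
    + rewrite <- !qSwap_compose; exact (IH ((xs, y, x) :: nil) _ _ _ _ Ha).
Qed.

Lemma alpha_qSwap (X Y : term) zs u v : alpha X Y -> alpha (qSwap zs u v X) (qSwap zs u v Y).
Proof. apply alpha_qSwap_all. Qed.

Lemma alpha_sym_all :
  (forall X Y : term, alpha X Y -> alpha Y X) /\ (forall A B : abs, alphaAbs A B -> alphaAbs B A).
Proof.
  apply qterm_qabs_swap_ind.
  - intros xs x Y H; rewrite (alpha_qVar_inv H); constructor.
  - intros d inp binp IH1 IH2 Y H.
    destruct (alpha_qOp_inv H) as [inp' [binp' [-> [H1 H2]]]]; constructor.
    + eapply lift_sym; [exact H1 | eauto].
    + eapply lift_sym; [exact H2 | eauto].
  - intros xs x X IH B H.
    destruct (alphaAbs_inv H) as [x' [X' [y [-> [N1 [N2 [F1 [F2 Ha]]]]]]]].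
    apply alphaAbs_Abs with (y := y); auto.
    exact (IH ((xs, y, x) :: nil) _ Ha).
Qed.

Lemma alpha_sym (X Y : term) : alpha X Y -> alpha Y X.
Proof. apply alpha_sym_all. Qed.

Lemma alpha_refl_all :
  (forall X : term, qGood X -> alpha X X) /\ (forall A : abs, qGoodAbs A -> alphaAbs A A).
Proof.
  apply qterm_qabs_swap_ind.
  - intros; constructor.
  - intros d inp binp IH1 IH2 G; constructor; apply lift_refl;
      eauto using qGood_arg, qGood_absarg.
  - simpl; intros xs x X IH G.
    pick_fresh y (fun v => qOccurs v X \/ v = x).
    apply alphaAbs_Abs with (y := y); auto using qFresh_of_not_qOccurs.
    apply (IH ((xs, y, x) :: nil)), qGood_qSwap, G.
Qed.

Lemma alpha_refl (X : term) : qGood X -> alpha X X.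
Proof. apply alpha_refl_all. Qed.

Lemma qFresh_qSwap_of_qFreshAbs xs zs x y z (X : term) :
  qFreshAbs zs z (qAbs xs x X) -> (xs = zs -> y <> z) -> qFresh xs y X ->
  qFresh zs z (qSwap xs y x X).
Proof.
  simpl; intros H N F; rewrite qFresh_qSwap.
  destruct (classic (xs = zs)) as [<-|E].
  - destruct (classic (z = x)) as [->|Ex]; [rewrite swS_r; exact F|].
    rewrite swS_id by (intros _; split; [intros ->; exact (N eq_refl eq_refl) | exact Ex]).
    destruct H as [[_ <-]|H]; [contradiction | exact H].
  - rewrite swS_sort_neq by auto; destruct H as [[<- _]|H]; [contradiction | exact H].
Qed.

Lemma alpha_qSwap_fresh_all :
  (forall X : term, qGood X -> forall zs z1 z2, qFresh zs z1 X -> qFresh zs z2 X ->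
     alpha (qSwap zs z1 z2 X) X) /\
  (forall A : abs, qGoodAbs A -> forall zs z1 z2, qFreshAbs zs z1 A -> qFreshAbs zs z2 A ->
     alphaAbs (qSwapAbs zs z1 z2 A) A).
Proof.
  apply qterm_qabs_swap_ind.
  - simpl; intros ys w _ zs z1 z2 F1 F2; rewrite swS_id; [constructor|].
    intros ->; split; intros ->; auto.
  - intros d inp binp IH1 IH2 G zs z1 z2 [F1 F2] [F1' F2']; simpl; constructor; intro i.
    + specialize (F1 i); specialize (F1' i); destruct (inp i) eqn:E; [right | left; auto].
      do 2 eexists; split; [reflexivity | split; [reflexivity|]]; eauto using qGood_arg.
    + specialize (F2 i); specialize (F2' i); destruct (binp i) eqn:E; [right | left; auto].
      do 2 eexists; split; [reflexivity | split; [reflexivity|]]; eauto using qGood_absarg.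
  - simpl; intros xs x X IH G zs z1 z2 F1 F2.
    pick_fresh y (fun v => qOccurs v X \/ v = x \/ v = z1 \/ v = z2 \/ v = swS zs xs z1 z2 x).
    apply alphaAbs_Abs with (y := y); auto using qFresh_of_not_qOccurs.
    + rewrite qFresh_qSwap, swS_id; auto using qFresh_of_not_qOccurs.
    + replace (qSwap xs y (swS zs xs z1 z2 x) (qSwap zs z1 z2 X))
        with (qSwap zs z1 z2 (qSwap xs y x X))
        by (rewrite qSwap_compose, (@swS_id zs xs z1 z2 y); auto).
      apply (IH ((xs, y, x) :: nil)); [apply qGood_qSwap; exact G | |];
        apply qFresh_qSwap_of_qFreshAbs; auto using qFresh_of_not_qOccurs.
Qed.

Lemma alpha_qSwap_fresh (X : term) zs z1 z2 :
  qGood X -> qFresh zs z1 X -> qFresh zs z2 X -> alpha (qSwap zs z1 z2 X) X.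
Proof. intros; apply alpha_qSwap_fresh_all; auto. Qed.

(* Moving from witness [y1] to [y] is a chain of three alpha-steps through
   [qSwap xs y y1 X], so it only needs transitivity through terms starting at [W];
   this is what the induction for transitivity can provide. *)
Lemma alpha_change_witness_from (W : term) xs x (X : term) x' (X' : term) y1 y :
  qGood X -> qGood X' ->
  (forall Y Z, qGood Y -> qGood Z -> alpha W Y -> alpha Y Z -> alpha W Z) ->
  y1 <> x -> y1 <> x' -> qFresh xs y1 X -> qFresh xs y1 X' ->
  alpha (qSwap xs y1 x X) (qSwap xs y1 x' X') ->
  y <> x -> y <> x' -> qFresh xs y X -> qFresh xs y X' ->
  alpha W (qSwap xs y x X) -> alpha W (qSwap xs y x' X').
Proof.
  intros G G' T N1 N2 F1 F2 Ha M1 M2 E1 E2 HW.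
  assert (swap_through : forall x0 (X0 : term), y1 <> x0 -> y <> x0 ->
            qSwap xs y y1 (qSwap xs y1 x0 X0) = qSwap xs y x0 (qSwap xs y y1 X0)).
  { intros x0 X0 K1 K2; rewrite qSwap_compose, swS_r, swS_id; auto. }
  assert (h1 : alpha (qSwap xs y x X) (qSwap xs y x (qSwap xs y y1 X))).
  { apply alpha_sym, alpha_qSwap, alpha_qSwap_fresh; auto. }
  assert (h2 : alpha (qSwap xs y x (qSwap xs y y1 X)) (qSwap xs y x' (qSwap xs y y1 X'))).
  { rewrite <- !swap_through by auto; exact (alpha_qSwap xs y y1 Ha). }
  assert (h3 : alpha (qSwap xs y x' (qSwap xs y y1 X')) (qSwap xs y x' X')).
  { apply alpha_qSwap, alpha_qSwap_fresh; auto. }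
  apply T with (qSwap xs y x' (qSwap xs y y1 X')); auto using qGood_qSwap.
  apply T with (qSwap xs y x (qSwap xs y y1 X)); auto using qGood_qSwap.
  apply T with (qSwap xs y x X); auto using qGood_qSwap.
Qed.

Lemma alpha_trans_all :
  (forall X : term, qGood X -> forall Y Z, qGood Y -> qGood Z ->
     alpha X Y -> alpha Y Z -> alpha X Z) /\
  (forall A : abs, qGoodAbs A -> forall B C, qGoodAbs B -> qGoodAbs C ->
     alphaAbs A B -> alphaAbs B C -> alphaAbs A C).
Proof.
  apply qterm_qabs_swap_ind.
  - intros xs x _ Y Z _ _ H1 H2; rewrite (alpha_qVar_inv H1) in H2; exact H2.
  - intros d inp binp IH1 IH2 G Y Z GY GZ H H'.
    destruct (alpha_qOp_inv H) as [inp' [binp' [-> [H1 H2]]]].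
    destruct (alpha_qOp_inv H') as [inp'' [binp'' [-> [H1' H2']]]].
    constructor.
    + eapply lift_trans; [exact H1 | exact H1' |].
      intros i A B C EA EB EC; eapply IH1; eauto using qGood_arg.
    + eapply lift_trans; [exact H2 | exact H2' |].
      intros i A B C EA EB EC; eapply IH2; eauto using qGood_absarg.
  - simpl; intros xs x X IH G B C GB GC H H'.
    destruct (alphaAbs_inv H) as [x' [X' [y1 [-> [N1 [N2 [F1 [F2 Ha]]]]]]]].
    destruct (alphaAbs_inv H') as [x'' [X'' [y2 [-> [N1' [N2' [F1' [F2' Ha']]]]]]]].
    simpl in GB, GC.
    pick_fresh y (fun v => qOccurs v X \/ qOccurs v X' \/ qOccurs v X'' \/
                           v = x \/ v = x' \/ v = x'').
    apply alphaAbs_Abs with (y := y); auto using qFresh_of_not_qOccurs.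
    assert (T : forall Y Z, qGood Y -> qGood Z -> alpha (qSwap xs y x X) Y -> alpha Y Z ->
                  alpha (qSwap xs y x X) Z).
    { intros Y Z GY GZ; apply (IH ((xs, y, x) :: nil)); simpl; auto using qGood_qSwap. }
    apply alpha_change_witness_from with x' X' y2; auto using qFresh_of_not_qOccurs.
    apply alpha_change_witness_from with x X y1; auto using qFresh_of_not_qOccurs.
    apply alpha_refl, qGood_qSwap, G.
Qed.

Lemma alpha_trans (X Y Z : term) :
  qGood X -> qGood Y -> qGood Z -> alpha X Y -> alpha Y Z -> alpha X Z.
Proof. intros GX; exact (proj1 alpha_trans_all X GX Y Z). Qed.

Lemma alpha_change_witness xs x (X : term) x' (X' : term) y1 y :
  qGood X -> qGood X' ->
  y1 <> x -> y1 <> x' -> qFresh xs y1 X -> qFresh xs y1 X' ->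
  alpha (qSwap xs y1 x X) (qSwap xs y1 x' X') ->
  y <> x -> y <> x' -> qFresh xs y X -> qFresh xs y X' ->
  alpha (qSwap xs y x X) (qSwap xs y x' X').
Proof.
  intros; apply alpha_change_witness_from with x X y1; auto using alpha_refl, qGood_qSwap.
  intros Y Z GY GZ; apply alpha_trans; auto using qGood_qSwap.
Qed.

Lemma alpha_alphaAll_all :
  (forall X : term, qGood X -> forall Y, qGood Y -> alpha X Y -> alphaAll X Y) /\
  (forall A : abs, qGoodAbs A -> forall B, qGoodAbs B -> alphaAbs A B -> alphaAllAbs A B).
Proof.
  apply qterm_qabs_swap_ind.
  - intros xs x _ Y _ H; rewrite (alpha_qVar_inv H); constructor.
  - intros d inp binp IH1 IH2 G Y GY H.
    destruct (alpha_qOp_inv H) as [inp' [binp' [-> [H1 H2]]]]; constructor.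
    + eapply lift_mono; [exact H1|]; intros i A B EA EB HA; eapply IH1; eauto using qGood_arg.
    + eapply lift_mono; [exact H2|]; intros i A B EA EB HA; eapply IH2; eauto using qGood_absarg.
  - simpl; intros xs x X IH G B GB H.
    destruct (alphaAbs_inv H) as [x' [X' [y1 [-> [N1 [N2 [F1 [F2 Ha]]]]]]]]; simpl in GB.
    constructor; intros y M1 M2 E1 E2.
    apply (IH ((xs, y, x) :: nil)); simpl; auto using qGood_qSwap.
    apply alpha_change_witness with y1; auto.
Qed.

Lemma alphaAll_alpha_all :
  (forall X : term, qGood X -> forall Y, qGood Y -> alphaAll X Y -> alpha X Y) /\
  (forall A : abs, qGoodAbs A -> forall B, qGoodAbs B -> alphaAllAbs A B -> alphaAbs A B).
Proof.
  apply qterm_qabs_swap_ind.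
  - intros xs x _ Y _ H; rewrite (alphaAll_qVar_inv H); constructor.
  - intros d inp binp IH1 IH2 G Y GY H.
    destruct (alphaAll_qOp_inv H) as [inp' [binp' [-> [H1 H2]]]]; constructor.
    + eapply lift_mono; [exact H1|]; intros i A B EA EB HA; eapply IH1; eauto using qGood_arg.
    + eapply lift_mono; [exact H2|]; intros i A B EA EB HA; eapply IH2; eauto using qGood_absarg.
  - simpl; intros xs x X IH G B GB H.
    destruct (alphaAllAbs_inv H) as [x' [X' [-> Ha]]]; simpl in GB.
    pick_fresh y (fun v => qOccurs v X \/ qOccurs v X' \/ v = x \/ v = x').
    apply alphaAbs_Abs with (y := y); auto using qFresh_of_not_qOccurs.
    apply (IH ((xs, y, x) :: nil)); simpl; auto using qGood_qSwap, qFresh_of_not_qOccurs.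
Qed.

End Alpha.

Theorem proposition2 (var varsort index bindex opsym : Type)
  (Hinf : infinite_type var) (Hreg : regular_type var) :
  ((forall X : qterm var varsort index bindex opsym, qGood X -> alpha X X) /\
   (forall X Y : qterm var varsort index bindex opsym,
      qGood X -> qGood Y -> alpha X Y -> alpha Y X) /\
   (forall X Y Z : qterm var varsort index bindex opsym,
      qGood X -> qGood Y -> qGood Z -> alpha X Y -> alpha Y Z -> alpha X Z)) /\
  ((forall A : qabs var varsort index bindex opsym, qGoodAbs A -> alphaAbs A A) /\
   (forall A B : qabs var varsort index bindex opsym,
      qGoodAbs A -> qGoodAbs B -> alphaAbs A B -> alphaAbs B A) /\
   (forall A B C : qabs var varsort index bindex opsym,
      qGoodAbs A -> qGoodAbs B -> qGoodAbs C ->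
      alphaAbs A B -> alphaAbs B C -> alphaAbs A C)) /\
  (forall X Y : qterm var varsort index bindex opsym,
      qGood X -> qGood Y -> (alphaAll X Y <-> alpha X Y)) /\
  (forall A B : qabs var varsort index bindex opsym,
      qGoodAbs A -> qGoodAbs B -> (alphaAllAbs A B <-> alphaAbs A B)).
Proof.
  destruct (@alpha_refl_all var varsort index bindex opsym Hinf Hreg) as [R1 R2].
  destruct (@alpha_sym_all var varsort index bindex opsym) as [S1 S2].
  destruct (@alpha_trans_all var varsort index bindex opsym Hinf Hreg) as [T1 T2].
  destruct (@alpha_alphaAll_all var varsort index bindex opsym Hinf Hreg) as [A1 A2].
  destruct (@alphaAll_alpha_all var varsort index bindex opsym Hinf Hreg) as [B1 B2].
  repeat split; eauto.
Qed.
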